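(* Under the hypotheses (torsion-free $G$; $l:G\to\mathbb{Z}^n$ a $\delta$-regular $\delta$-hyperbolic length function with (A) $ht(\delta)=1$, (B) $l(g^m)<l(g)$ for some nonzero integer $m$ implies $ht(l(g)-l(g^m))=1$, (C) $l(g)>0$ for $g\ne 1$), for every $k$ with $1\le k<n$ there is a simplicial tree $\Gamma$ whose vertex set is the set $G_{k+1}/G_k$ of left cosets of $G_k$ in $G_{k+1}$, on which $G_{k+1}$ acts by isometries without inversions, the action on vertices being left multiplication of cosets.
   Context: $\mathbb{Z}^n$ carries the right lexicographic order ($a<b$ iff $a_j<b_j$ for the largest $j$ with $a_j\ne b_j$); $ht(a)$ is the largest index $k$ with $a_k\ne0$, $ht(0)=0$. A length function satisfies $l(1)=0$, $l(g)\ge0$, $l(g^{-1})=l(g)$, $l(gh)\le l(g)+l(h)$; $c(g,h)=\tfrac12(l(g)+l(h)-l(g^{-1}h))$; $\delta$-hyperbolic: $c(f,g)\ge\min\{c(f,h),c(g,h)\}-\delta$ for all $f,g,h$; $\delta$-regular: for all $g,h$ there are $g_c,h_c,g_d,h_d$ with $l(g_c)=l(h_c)=c(g,h)$, $g=g_ch_c^{}$… precisely $g=g_cg_d$, $h=h_ch_d$ with $l(g)=l(g_c)+l(g_d)$, $l(h)=l(h_c)+l(h_d)$, and $l(g_c^{-1}h_c)\le4\delta$. $G_k=\{g\in G\mid ht(l(g))\le k\}$ (a subgroup of $G$). *)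

(* Z^n is modelled as 'rV[int]_n; paper index j (1..n)
   corresponds to the ordinal j-1 : 'I_n. *)
From HB Require Import structures.
From mathcomp Require Import all_boot all_order all_algebra.
Set Implicit Arguments. Unset Strict Implicit. Unset Printing Implicit Defensive.
Import Order.TTheory GRing.Theory Num.Theory.
Local Open Scope ring_scope.

Definition lexlt (n : nat) (a b : 'rV[int]_n) : bool :=
  [exists j : 'I_n, (a 0 j < b 0 j) &&
     [forall i : 'I_n, (j < i)%N ==> (a 0 i == b 0 i)]].

Definition lexle (n : nat) (a b : 'rV[int]_n) : bool := (a == b) || lexlt a b.

Definition lexmin (n : nat) (a b : 'rV[int]_n) : 'rV[int]_n :=
  if lexle a b then a else b.

Definition ht (n : nat) (a : 'rV[int]_n) : nat :=
  \max_(i : 'I_n | a 0 i != 0) i.+1.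

Record is_group (T : Type) (mul : T -> T -> T) (inv : T -> T) (e : T) : Prop := {
  grp_assoc : forall x y z, mul x (mul y z) = mul (mul x y) z;
  grp_id_l : forall x, mul e x = x;
  grp_inv_l : forall x, mul (inv x) x = e }.

Definition gpow (T : Type) (mul : T -> T -> T) (inv : T -> T) (e : T)
  (g : T) (m : int) : T :=
  match m with
  | Posz k => iter k (mul g) e
  | Negz k => iter k.+1 (mul (inv g)) e
  end.

Definition torsion_free (T : Type) (mul : T -> T -> T) (e : T) : Prop :=
  forall (g : T) (m : nat), (0 < m)%N -> iter m (mul g) e = e -> g = e.

Definition is_length_function (T : Type) (mul : T -> T -> T) (inv : T -> T)
  (e : T) (n : nat) (l : T -> 'rV[int]_n) : Prop :=
  [/\ l e = 0,
      forall g, lexle 0 (l g),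
      forall g, l (inv g) = l g &
      forall g h, lexle (l (mul g h)) (l g + l h)].

(* dbl_c g h = 2 c(g,h) = l(g) + l(h) - l(g^{-1} h) *)
Definition dbl_c (T : Type) (mul : T -> T -> T) (inv : T -> T) (n : nat)
  (l : T -> 'rV[int]_n) (g h : T) : 'rV[int]_n :=
  l g + l h - l (mul (inv g) h).

(* c(f,g) >= min{c(f,h), c(g,h)} - delta, multiplied through by 2 *)
Definition hyperbolic (T : Type) (mul : T -> T -> T) (inv : T -> T) (n : nat)
  (l : T -> 'rV[int]_n) (delta : 'rV[int]_n) : Prop :=
  forall f g h,
    lexle (lexmin (dbl_c mul inv l f h) (dbl_c mul inv l g h) - delta *+ 2)
          (dbl_c mul inv l f g).

Definition regular (T : Type) (mul : T -> T -> T) (inv : T -> T) (n : nat)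
  (l : T -> 'rV[int]_n) (delta : 'rV[int]_n) : Prop :=
  forall g h, exists gc hc gd hd,
    l gc *+ 2 = dbl_c mul inv l g h /\
    l hc *+ 2 = dbl_c mul inv l g h /\
    g = mul gc gd /\ h = mul hc hd /\
    l g = l gc + l gd /\ l h = l hc + l hd /\
    lexle (l (mul (inv gc) hc)) (delta *+ 4).

Definition Gk (T : Type) (n : nat) (l : T -> 'rV[int]_n) (k : nat) (g : T) : Prop :=
  (ht (l g) <= k)%N.

(* ---------- simplicial G_{k+1}-tree on the left cosets G_{k+1}/G_k ----------
   A vertex is a left coset x G_k with x in G_{k+1}; it is represented by x,
   and x, y represent the same vertex iff x^{-1} y \in G_k. *)

Definition same_coset (T : Type) (mul : T -> T -> T) (inv : T -> T) (n : nat)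
  (l : T -> 'rV[int]_n) (k : nat) (x y : T) : Prop :=
  Gk l k (mul (inv x) y).

Definition is_walk (T : Type) (e : T) (E : T -> T -> Prop) (s : seq T) : Prop :=
  forall i, (i.+1 < size s)%N -> E (nth e s i) (nth e s i.+1).

Definition coset_tree_action (T : Type) (mul : T -> T -> T) (inv : T -> T) (e : T)
  (n : nat) (l : T -> 'rV[int]_n) (k : nat) (E : T -> T -> Prop) : Prop :=
  let V := Gk l k.+1 in
  let eqv := same_coset mul inv l k in
  (
      forall x y, E x y -> V x /\ V y) /\
      (* E is a relation on cosets: independent of representatives *)
      (forall x x' y y', V x -> V y -> eqv x x' -> eqv y y' -> E x y -> E x' y') /\
      (forall x y, E x y -> E y x) /\
      (forall x y, V x -> V y -> exists s : seq T,
          [/\ is_walk e E s, (0 < size s)%N, eqv (nth e s 0) x &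
              eqv (last e s) y]) /\
      (* no loops and no cycles: every closed walk of positive length
         backtracks somewhere *)
      (forall s : seq T, is_walk e E s -> (1 < size s)%N ->
          eqv (nth e s 0) (last e s) ->
          exists i, [/\ (0 < i)%N, (i.+1 < size s)%N &
                       eqv (nth e s i.-1) (nth e s i.+1)]) /\
      (* G_{k+1} acts by left multiplication of cosets, preserving edges
         (hence by graph automorphisms, i.e. isometries) *)
      (forall g x y, V g -> E x y -> E (mul g x) (mul g y)) /\
      (forall g x y, V g -> E x y -> eqv (mul g x) y -> eqv (mul g y) x -> False).

(* On [G_{k+1}], the coordinate [k+1] of [l (x^-1 y)] is a left-invariant
   integer pseudometric whose zero set is exactly the relation of lying in the
   same [G_k]-coset.  As [delta] has height [1 <= k], hyperbolicity and
   regularity read in this coordinate make it 0-hyperbolic with tripods, i.e.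
   an integer-valued tree metric on [G_{k+1}/G_k].  Joining two cosets when
   nothing lies strictly between them gives a graph in which non-backtracking
   walks are geodesics, hence a simplicial tree, and [G_{k+1}] acts on it by
   left multiplication.  Inversions are excluded by (B) for [m = 2]. *)

From HB Require Import structures.
From mathcomp Require Import all_boot all_order all_algebra.
From mathcomp Require Import zify.
From Stdlib Require Import Classical.
Import Order.TTheory GRing.Theory Num.Theory.
Set Implicit Arguments. Unset Strict Implicit.
Local Open Scope ring_scope.

Section LexOrder.
Variable n : nat.
Implicit Types a b c u v x : 'rV[int]_n.

Lemma ht_leP a m : (ht a <= m)%N <-> (forall i : 'I_n, (m <= i)%N -> a 0 i = 0).
Proof.
split=> [/bigmax_leqP H i hi | H]; first by case: (a 0 i =P 0) => // /eqP /H; lia.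
apply/bigmax_leqP => i hi; case: (leqP m i) => // /H hz.
by rewrite hz eqxx in hi.
Qed.

Lemma ht0 : ht (0 : 'rV[int]_n) = 0%N.
Proof. by apply: big_pred0 => i; rewrite mxE eqxx. Qed.

Lemma ht_opp a : ht (- a) = ht a.
Proof. by apply: eq_bigl => i; rewrite mxE oppr_eq0. Qed.

Lemma ht_add_le a b m : (ht a <= m)%N -> (ht b <= m)%N -> (ht (a + b) <= m)%N.
Proof.
move=> /ht_leP ha /ht_leP hb; apply/ht_leP => i hi.
by rewrite mxE ha ?hb ?addr0.
Qed.

Lemma ht_muln a m : (ht (a *+ m) <= ht a)%N.
Proof.
apply/ht_leP => i hi.
by rewrite mulmxnE (proj1 (ht_leP a (ht a)) (leqnn _) i hi) mul0rn.
Qed.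

Lemma lexle0P a : lexle 0 a ->
  a = 0 \/ exists j : 'I_n, 0 < a 0 j /\ forall i : 'I_n, (j < i)%N -> a 0 i = 0.
Proof.
case/orP => [/eqP <-|/existsP [j /andP [ltj /forallP H]]]; [by left | right].
exists j; split; first by move: ltj; rewrite mxE.
by move=> i hi; move/implyP: (H i) => /(_ hi) /eqP <-; rewrite mxE.
Qed.

Lemma lexle_coord (j : 'I_n) a b : (ht a <= j.+1)%N -> (ht b <= j.+1)%N ->
  lexle a b -> a 0 j <= b 0 j.
Proof.
move=> /ht_leP va /ht_leP vb.
case/orP => [/eqP -> // | /existsP [i /andP [lti /forallP H]]].
case: (ltngtP i j) => hij.
- by move/implyP: (H j) => /(_ hij) /eqP ->.
- by rewrite (va _ hij) (vb _ hij) ltxx in lti.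
- have -> : j = i by apply: val_inj.
  exact: ltW.
Qed.

Lemma lexlt_coord (j : 'I_n) a b : (ht a <= j.+1)%N -> (ht b <= j.+1)%N ->
  a 0 j < b 0 j -> lexlt a b.
Proof.
move=> /ht_leP va /ht_leP vb ltj; apply/existsP; exists j; rewrite ltj.
by apply/forallP => i; apply/implyP => hi; rewrite va ?vb.
Qed.

Lemma ht_addl_le a b m : lexle 0 a -> lexle 0 b -> (ht (a + b) <= m)%N ->
  (ht a <= m)%N.
Proof.
move=> /lexle0P ha /lexle0P hb /ht_leP vab; apply/ht_leP => i hi.
case: ha => [-> | [ja [pa za]]]; first by rewrite mxE.
case: (leqP i ja) => hij; last exact: za.
exfalso; have hja : (m <= ja)%N by apply: leq_trans hi hij.
case: hb => [hb0 | [jb [pb zb]]].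
  by move: (vab ja hja); rewrite hb0 !mxE addr0 => h; rewrite h ltxx in pa.
case: (leqP jb ja) => hj.
  have hb : 0 <= b 0 ja.
    case: (ltngtP jb ja) hj => // [h1 _|h1 _]; first by rewrite zb.
    have -> : ja = jb by apply: val_inj.
    exact: ltW.
  move: (vab ja hja); rewrite !mxE => h.
  by have := ltr_wpDr hb pa; rewrite h ltxx.
move: (vab jb (leq_trans hja (ltnW hj))); rewrite !mxE (za _ hj) add0r => h.
by rewrite h ltxx in pb.
Qed.

Lemma lexle_ht_le a b m : lexle 0 a -> lexle a b -> (ht b <= m)%N -> (ht a <= m)%N.
Proof.
move=> /lexle0P ha hab /ht_leP vb; apply/ht_leP => i hi.
case: ha => [-> | [ja [pa za]]]; first by rewrite mxE.
case: (leqP i ja) => hij; last exact: za.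
exfalso; have hja : (m <= ja)%N by apply: leq_trans hi hij.
case/orP: hab => [/eqP hab | /existsP [j /andP [ltj /forallP H]]].
  by move: pa; rewrite hab (vb _ hja) ltxx.
case: (ltngtP j ja) => hj.
- by move/implyP: (H ja) => /(_ hj) /eqP; rewrite (vb _ hja) => h; rewrite h ltxx in pa.
- by move: ltj; rewrite (za _ hj) (vb _ (leq_trans hja (ltnW hj))) ltxx.
- have ej : j = ja by apply: val_inj.
  by move: ltj; rewrite ej (vb _ hja) => h; have := lt_trans h pa; rewrite ltxx.
Qed.

Lemma lexle_lexmin_coord (j : 'I_n) u v c x :
  (ht u <= j.+1)%N -> (ht v <= j.+1)%N -> (ht x <= j.+1)%N -> (ht c <= j)%N ->
  lexle (lexmin u v - c) x -> u 0 j <= x 0 j \/ v 0 j <= x 0 j.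
Proof.
move=> hu hv hx hc; have cj : c 0 j = 0 by apply: (proj1 (ht_leP c j)).
have hc' : (ht (- c) <= j.+1)%N by rewrite ht_opp; apply: leqW.
rewrite /lexmin; case: ifP => _ H; [left | right].
- by have := lexle_coord (ht_add_le hu hc') hx H; rewrite !mxE cj subr0.
- by have := lexle_coord (ht_add_le hv hc') hx H; rewrite !mxE cj subr0.
Qed.

End LexOrder.

Section Walks.
Variables (T : Type) (x0 : T) (E : T -> T -> Prop).

Lemma is_walk_cons x y s :
  is_walk x0 E (x :: y :: s) <-> E x y /\ is_walk x0 E (y :: s).
Proof.
split=> [H | [h1 h2] [|i] hi //]; last exact: h2.
by split; [exact: (H 0%N) | move=> i hi; exact: (H i.+1)].
Qed.

Lemma is_walk_cat x s t : is_walk x0 E (x :: s) -> is_walk x0 E (last x s :: t) ->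
  is_walk x0 E (x :: s ++ t).
Proof.
elim: s x => [//|y s IH] x /is_walk_cons [h1 h2] h3 /=.
by apply/is_walk_cons; split => //; apply: IH.
Qed.

End Walks.

Section IntegerTree.
Variables (T : Type) (V : T -> Prop) (d : T -> T -> int).

(* Twice the Gromov product [(x|y)_b]. *)
Definition gromov b x y := d b x + d b y - d x y.

Definition adjacent x y := [/\ V x, V y, 0 < d x y &
  forall z, V z -> d x z + d z y = d x y -> d x z = 0 \/ d z y = 0].

Hypothesis d_ge0 : forall x y, V x -> V y -> 0 <= d x y.
Hypothesis d_xx : forall x, d x x = 0.
Hypothesis d_sym : forall x y, d x y = d y x.
Hypothesis d_triangle : forall x y z, V x -> V y -> V z -> d x z <= d x y + d y z.
Hypothesis d_hyperbolic : forall b x y w, V b -> V x -> V y -> V w ->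
  gromov b x w <= gromov b x y \/ gromov b y w <= gromov b x y.
Hypothesis d_tripod : forall b x y, V b -> V x -> V y -> exists z z', [/\ V z, V z',
  d b z + d b z = gromov b x y, d b z' = d b z &
  [/\ d b z + d z x = d b x, d b z' + d z' y = d b y & d z z' = 0]].

Lemma d_eq0_congr x x' w : V x -> V x' -> V w -> d x x' = 0 -> d x' w = d x w.
Proof.
move=> vx vx' vw h0; apply/eqP; rewrite eq_le.
have := d_triangle vx' vx vw; have := d_triangle vx vx' vw.
by rewrite (d_sym x' x) h0 !add0r => -> ->.
Qed.

Lemma d_congr x x' y y' : V x -> V x' -> V y -> V y' ->
  d x x' = 0 -> d y y' = 0 -> d x' y' = d x y.
Proof.
move=> vx vx' vy vy' hx hy.
by rewrite (d_eq0_congr vx vx' vy' hx) d_sym (d_eq0_congr vy vy' vx hy) d_sym.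
Qed.

Lemma adjacent_sym x y : adjacent x y -> adjacent y x.
Proof.
case=> vx vy p H; split => //; first by rewrite d_sym.
move=> z vz; rewrite (d_sym y z) (d_sym z x) (d_sym y x) addrC => /(H z vz).
by case; [right | left].
Qed.

Lemma adjacent_congr x x' y y' : V x' -> V y' -> d x x' = 0 -> d y y' = 0 ->
  adjacent x y -> adjacent x' y'.
Proof.
move=> vx' vy' hx hy [vx vy p H]; split=> // [|z vz].
  by rewrite (d_congr vx vx' vy vy' hx hy).
rewrite (d_congr vx vx' vz vz hx (d_xx z)) (d_congr vz vz vy vy' (d_xx z) hy).
rewrite (d_congr vx vx' vy vy' hx hy); exact: H.
Qed.

(* The tripod point of [b] over [a], [c] lies on both edges; it is neither [a]
   nor [c] since [0 < d a c], so it is [b]. *)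
Lemma adjacent_geodesic a b c : adjacent a b -> adjacent b c -> 0 < d a c ->
  d a c = d a b + d b c.
Proof.
move=> [va vb pab Hab] [_ vc pbc Hbc] pac.
have [z [z' [vz vz' h1 h2 [h3 h4 h5]]]] := d_tripod vb va vc.
move: h1; rewrite /gromov => h1.
have Hba w : V w -> d b w + d w a = d b a -> d b w = 0 \/ d w a = 0.
  move=> vw; rewrite (d_sym b w) (d_sym w a) (d_sym b a) addrC => /(Hab w vw).
  by case; [right | left].
case: (Hba z vz h3) => [hz | hza].
  by move: h1; rewrite hz (d_sym a b); lia.
case: (Hbc z' vz' h4) => [hz' | hz'c].
  by move: h1 hz'; rewrite h2 (d_sym a b) => h1 hz; lia.
have := d_triangle va vz vc; have := d_triangle vz vz' vc.
by rewrite h5 hz'c (d_sym a z) hza; lia.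
Qed.

Lemma geodesic_extend v a b c : V v -> adjacent a b -> adjacent b c ->
  d v b = d v a + d a b -> d a c = d a b + d b c -> d v c = d v b + d b c.
Proof.
move=> vv [va vb pab _] [_ vc _ _] h1 h2.
have := d_hyperbolic vb va vc vv; rewrite /gromov h2 (d_sym b a) (d_sym a v).
rewrite (d_sym b v) h1.
have := d_triangle vv vb vc; rewrite (d_sym b c) (d_sym v c).
have := d_ge0 va vv; have := d_ge0 va vb; lia.
Qed.

Lemma adjacent_walk_nth_in x0 s : is_walk x0 adjacent s -> (1 < size s)%N ->
  forall i, (i < size s)%N -> V (nth x0 s i).
Proof.
move=> hw hs [|i] hi; first by have [] := hw 0%N hs.
by have [] := hw i hi.
Qed.

Lemma nonbacktracking_walk_geodesic x0 s : is_walk x0 adjacent s ->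
  (forall i, (i.+2 < size s)%N -> 0 < d (nth x0 s i) (nth x0 s i.+2)) ->
  forall i, (i.+1 < size s)%N ->
  d (nth x0 s 0) (nth x0 s i.+1) = d (nth x0 s 0) (nth x0 s i) + d (nth x0 s i) (nth x0 s i.+1).
Proof.
move=> hw nb; elim=> [|i IH] hi; first by rewrite d_xx add0r.
have hs : (1 < size s)%N by lia.
have hi' : (i.+1 < size s)%N by lia.
apply: (geodesic_extend (adjacent_walk_nth_in hw hs (ltnW hs)) (hw i hi') (hw i.+1 hi)).
  exact: IH.
exact: adjacent_geodesic (hw i hi') (hw i.+1 hi) (nb i hi).
Qed.

Lemma closed_adjacent_walk_backtracks x0 s : is_walk x0 adjacent s -> (1 < size s)%N ->
  d (nth x0 s 0) (last x0 s) = 0 ->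
  exists i, [/\ (0 < i)%N, (i.+1 < size s)%N & d (nth x0 s i.-1) (nth x0 s i.+1) = 0].
Proof.
move=> hw hs heq; apply: NNPP => hno.
have Vs := adjacent_walk_nth_in hw hs.
have nb i : (i.+2 < size s)%N -> 0 < d (nth x0 s i) (nth x0 s i.+2).
  move=> hi; rewrite lt_def d_ge0 ?andbT; try by apply: Vs; lia.
  by apply/eqP => h0; apply: hno; exists i.+1.
have [m hm] : exists m, size s = m.+2 by exists (size s).-2; lia.
have hm1 : (m.+1 < size s)%N by rewrite hm.
have [_ _ pm _] := hw m hm1.
have := nonbacktracking_walk_geodesic hw nb hm1.
have := d_ge0 (Vs 0%N (ltnW hs)) (Vs m (ltnW hm1)).
by move: heq; rewrite -nth_last hm /=; lia.
Qed.

Lemma adjacent_walk_of_pos x0 m x y : V x -> V y -> 0 < d x y -> d x y <= m%:Z ->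
  exists t, is_walk x0 adjacent (x :: t) /\ last x t = y.
Proof.
elim: m x y => [|m IH] x y vx vy p hm; first by lia.
case: (classic (adjacent x y)) => hxy.
  by exists [:: y]; split => //; apply/is_walk_cons; split => // i.
have [z [vz hs h1 h2]] :
    exists z, [/\ V z, d x z + d z y = d x y, d x z <> 0 & d z y <> 0].
  apply: NNPP => hno; apply: hxy; split => // z vz hs.
  case: (d x z =P 0) => [|h1]; [by left|]; case: (d z y =P 0) => [|h2]; [by right|].
  by exfalso; apply: hno; exists z.
have := d_ge0 vx vz; have := d_ge0 vz vy => g1 g2.
have [t1 [w1 l1]] := IH x z vx vz ltac:(lia) ltac:(lia).
have [t2 [w2 l2]] := IH z y vz vy ltac:(lia) ltac:(lia).
exists (t1 ++ t2); split; first by apply: is_walk_cat => //; rewrite l1.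
by rewrite last_cat l1.
Qed.

Lemma adjacent_connected x0 x y : V x -> V y ->
  exists t, [/\ is_walk x0 adjacent (x :: t), V (last x t) & d (last x t) y = 0].
Proof.
move=> vx vy; case: (d x y =P 0) => h0; first by exists [::].
have := d_ge0 vx vy => g.
have [t [w lt]] := adjacent_walk_of_pos x0 (m := `|d x y|%N) vx vy ltac:(lia) ltac:(lia).
by exists t; rewrite lt d_xx.
Qed.

End IntegerTree.

Section LengthFunction.
Variables (T : Type) (mul : T -> T -> T) (inv : T -> T) (e : T).
Hypothesis HG : is_group mul inv e.

Lemma grp_mulgV x : mul x (inv x) = e.
Proof.
case: HG => A I L.
have H : mul (inv (inv x)) (mul (inv x) (mul x (inv x))) = mul x (inv x).
  by rewrite (A (inv (inv x))) (L (inv x)) I.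
by rewrite -H (A (inv x) x (inv x)) (L x) (I (inv x)) (L (inv x)).
Qed.

Lemma grp_mulg1 x : mul x e = x.
Proof. by case: HG => A I L; rewrite -(L x) (A x (inv x) x) grp_mulgV I. Qed.

Lemma grp_mulKg x y : mul (inv x) (mul x y) = y.
Proof. by case: HG => A I L; rewrite A L I. Qed.

Lemma grp_invgK x : inv (inv x) = x.
Proof. by case: HG => A I L; rewrite -[inv (inv x)]grp_mulg1 -(L x) grp_mulKg. Qed.

Lemma grp_mulKVg x y : mul x (mul (inv x) y) = y.
Proof. by rewrite -{1}(grp_invgK x) grp_mulKg. Qed.

Lemma grp_invMg x y : inv (mul x y) = mul (inv y) (inv x).
Proof.
have H : mul (mul x y) (mul (inv y) (inv x)) = e.
  by case: HG => A I L; rewrite -A grp_mulKVg grp_mulgV.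
by rewrite -[inv (mul x y)]grp_mulg1 -H grp_mulKg.
Qed.

Lemma grp_ldiv_mul2l g x y : mul (inv (mul g x)) (mul g y) = mul (inv x) y.
Proof. by case: HG => A I L; rewrite grp_invMg -A grp_mulKg. Qed.

Lemma grp_ldiv_trans x y z : mul (mul (inv x) y) (mul (inv y) z) = mul (inv x) z.
Proof. by case: HG => A I L; rewrite -A grp_mulKVg. Qed.

Variables (n : nat) (l : T -> 'rV[int]_n).
Hypothesis Hl : is_length_function mul inv e l.

Lemma Gk_mul m g h : Gk l m g -> Gk l m h -> Gk l m (mul g h).
Proof.
case: Hl => _ Hpos _ Hsub hg hh.
exact: lexle_ht_le (Hpos _) (Hsub g h) (ht_add_le hg hh).
Qed.

Lemma Gk_inv m g : Gk l m g -> Gk l m (inv g).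
Proof. by case: Hl => _ _ Hinv _; rewrite /Gk Hinv. Qed.

Lemma Gk_ldiv m x y : Gk l m x -> Gk l m y -> Gk l m (mul (inv x) y).
Proof. by move=> hx hy; apply: Gk_mul => //; apply: Gk_inv. Qed.

Lemma Gk_leq m m' g : (m <= m')%N -> Gk l m g -> Gk l m' g.
Proof. by move=> hm hg; apply: leq_trans hg hm. Qed.

Variables (k : nat) (hkn : (k < n)%N).

(* Coordinate [k+1] of [l (x^-1 y)] in the paper's indexing, the top one on
   [G_{k+1}]. *)
Definition coset_dist x y : int := l (mul (inv x) y) 0 (Ordinal hkn).

Lemma coset_dist_xx x : coset_dist x x = 0.
Proof. by case: Hl => H0 _ _ _; rewrite /coset_dist (grp_inv_l HG) H0 mxE. Qed.

Lemma coset_dist_sym x y : coset_dist x y = coset_dist y x.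
Proof. by case: Hl => _ _ Hinv _; rewrite /coset_dist -Hinv grp_invMg grp_invgK. Qed.

Lemma coset_dist_mul2l g x y : coset_dist (mul g x) (mul g y) = coset_dist x y.
Proof. by rewrite /coset_dist grp_ldiv_mul2l. Qed.

Lemma coset_dist_ge0 x y : Gk l k.+1 x -> Gk l k.+1 y -> 0 <= coset_dist x y.
Proof.
case: Hl => _ Hpos _ _ vx vy.
have := lexle_coord (j := Ordinal hkn) (a := 0) _ (Gk_ldiv vx vy) (Hpos _).
by rewrite ht0 mxE; apply.
Qed.

Lemma coset_dist_triangle x y z : Gk l k.+1 x -> Gk l k.+1 y -> Gk l k.+1 z ->
  coset_dist x z <= coset_dist x y + coset_dist y z.
Proof.
case: Hl => _ _ _ Hsub vx vy vz.
have hxy := Gk_ldiv vx vy; have hyz := Gk_ldiv vy vz.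
have := lexle_coord (j := Ordinal hkn) _ (ht_add_le hxy hyz) (Hsub _ _).
by rewrite grp_ldiv_trans mxE; apply; apply: Gk_ldiv.
Qed.

Lemma same_coset_dist0 x y : Gk l k.+1 x -> Gk l k.+1 y ->
  same_coset mul inv l k x y <-> coset_dist x y = 0.
Proof.
move=> vx vy; have /ht_leP vxy := Gk_ldiv vx vy.
rewrite /same_coset /Gk ht_leP; split=> [H | H0 i hi]; first exact: H.
case: (ltngtP k i) hi => // hki _; first exact: vxy.
by have -> : i = Ordinal hkn by apply: val_inj.
Qed.

Variable delta : 'rV[int]_n.
Hypothesis Hdelta : (ht delta <= k)%N.
Hypothesis Hhyp : hyperbolic mul inv l delta.
Hypothesis Hreg : regular mul inv l delta.

Lemma ht_delta_muln m : (ht (delta *+ m) <= k)%N.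
Proof. exact: leq_trans (ht_muln _ _) Hdelta. Qed.

Lemma coset_dist_hyperbolic b x y w :
  Gk l k.+1 b -> Gk l k.+1 x -> Gk l k.+1 y -> Gk l k.+1 w ->
  gromov coset_dist b x w <= gromov coset_dist b x y \/
  gromov coset_dist b y w <= gromov coset_dist b x y.
Proof.
move=> vb vx vy vw.
have hc u v : Gk l k.+1 u -> Gk l k.+1 v ->
    (ht (dbl_c mul inv l (mul (inv b) u) (mul (inv b) v)) <= k.+1)%N.
  move=> vu vv; rewrite /dbl_c grp_ldiv_mul2l.
  by apply: ht_add_le; [apply: ht_add_le | rewrite ht_opp]; apply: Gk_ldiv.
have := lexle_lexmin_coord (j := Ordinal hkn) (hc _ _ vx vw) (hc _ _ vy vw) (hc _ _ vx vy)
  (ht_delta_muln 2) (Hhyp (mul (inv b) x) (mul (inv b) y) (mul (inv b) w)).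
by rewrite /dbl_c !grp_ldiv_mul2l !mxE.
Qed.

Lemma coset_dist_tripod b x y : Gk l k.+1 b -> Gk l k.+1 x -> Gk l k.+1 y ->
  exists z z', [/\ Gk l k.+1 z, Gk l k.+1 z',
    coset_dist b z + coset_dist b z = gromov coset_dist b x y,
    coset_dist b z' = coset_dist b z &
    [/\ coset_dist b z + coset_dist z x = coset_dist b x,
        coset_dist b z' + coset_dist z' y = coset_dist b y & coset_dist z z' = 0]].
Proof.
move=> vb vx vy; case: Hl => _ Hpos _ _.
have [gc [hc [gd [hd [H1 [H2 [Hg [Hh [Hlg [Hlh H4]]]]]]]]]] :=
  Hreg (mul (inv b) x) (mul (inv b) y).
have vgc : Gk l k.+1 gc.
  by apply: ht_addl_le (Hpos gc) (Hpos gd) _; rewrite -Hlg; apply: Gk_ldiv.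
have vhc : Gk l k.+1 hc.
  by apply: ht_addl_le (Hpos hc) (Hpos hd) _; rewrite -Hlh; apply: Gk_ldiv.
pose coord (a : 'rV[int]_n) := a 0 (Ordinal hkn).
have db u : coset_dist b (mul b u) = coord (l u) by rewrite /coset_dist grp_mulKg.
have dc u v w : mul (inv b) w = mul u v -> coset_dist (mul b u) w = coord (l v).
  by move=> huv; rewrite /coset_dist grp_invMg -(grp_assoc HG) huv grp_mulKg.
move: H1 H2 Hlg Hlh => /(congr1 coord) + /(congr1 coord) + /(congr1 coord) + /(congr1 coord).
rewrite /coord /dbl_c !grp_ldiv_mul2l !mxE => H1 H2 Hlg Hlh.
exists (mul b gc), (mul b hc); split; [exact: Gk_mul | exact: Gk_mul | | | split].
- by rewrite db /gromov /coset_dist.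
- have double_inj (u v : int) : u + u = v + v -> u = v by lia.
  by rewrite !db; apply: double_inj; rewrite H1 H2.
- by rewrite db (dc _ _ _ Hg) /coord /coset_dist.
- by rewrite db (dc _ _ _ Hh) /coord /coset_dist.
- apply/eqP; rewrite eq_le coset_dist_ge0 ?andbT; try exact: Gk_mul.
  have dK : delta 0 (Ordinal hkn) = 0 by apply: (proj1 (ht_leP _ _) Hdelta).
  have := lexle_coord (j := Ordinal hkn) (Gk_ldiv vgc vhc) (leqW (ht_delta_muln 4)) H4.
  by rewrite coset_dist_mul2l /coset_dist mulmxnE dK mul0rn.
Qed.

Local Notation coset_adjacent := (adjacent (Gk l k.+1) coset_dist).

Lemma same_coset_Gk x y : Gk l k.+1 x -> same_coset mul inv l k x y -> Gk l k.+1 y.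
Proof.
by move=> vx hxy; rewrite -(grp_mulKVg x y); apply: Gk_mul vx (Gk_leq (leqnSn k) hxy).
Qed.

Lemma coset_adjacent_congr x x' y y' : Gk l k.+1 x -> Gk l k.+1 y ->
  same_coset mul inv l k x x' -> same_coset mul inv l k y y' ->
  coset_adjacent x y -> coset_adjacent x' y'.
Proof.
move=> vx vy hx hy; have vx' := same_coset_Gk vx hx; have vy' := same_coset_Gk vy hy.
apply: (adjacent_congr (x := x) (y := y) coset_dist_xx coset_dist_sym coset_dist_triangle
  vx' vy').
- exact/(same_coset_dist0 vx vx').
- exact/(same_coset_dist0 vy vy').
Qed.

Lemma coset_adjacent_connected x y : Gk l k.+1 x -> Gk l k.+1 y ->
  exists s, [/\ is_walk e coset_adjacent s, (0 < size s)%N,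
    same_coset mul inv l k (nth e s 0) x & same_coset mul inv l k (last e s) y].
Proof.
move=> vx vy.
have [t [hw vt ht]] := adjacent_connected coset_dist_ge0 coset_dist_xx e vx vy.
exists (x :: t); split => //=.
- by apply/(same_coset_dist0 vx vx); rewrite coset_dist_xx.
- exact/(same_coset_dist0 vt vy).
Qed.

Lemma coset_adjacent_acyclic s : is_walk e coset_adjacent s -> (1 < size s)%N ->
  same_coset mul inv l k (nth e s 0) (last e s) ->
  exists i, [/\ (0 < i)%N, (i.+1 < size s)%N &
    same_coset mul inv l k (nth e s i.-1) (nth e s i.+1)].
Proof.
move=> hw hs; have Vs := adjacent_walk_nth_in hw hs.
have V0 : Gk l k.+1 (nth e s 0) by apply: Vs; apply: ltnW.
have Vlast : Gk l k.+1 (last e s) by rewrite -nth_last; apply: Vs; lia.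
move/(same_coset_dist0 V0 Vlast) => heq.
have [i [i0 hi hb]] := closed_adjacent_walk_backtracks coset_dist_ge0 coset_dist_xx
  coset_dist_sym coset_dist_triangle coset_dist_hyperbolic coset_dist_tripod hw hs heq.
exists i; split => //; apply/same_coset_dist0 => //; apply: Vs; lia.
Qed.

Lemma coset_adjacent_mul2l g x y : Gk l k.+1 g ->
  coset_adjacent x y -> coset_adjacent (mul g x) (mul g y).
Proof.
move=> vg [vx vy p H]; split; try exact: Gk_mul; first by rewrite coset_dist_mul2l.
move=> z vz; rewrite coset_dist_mul2l -(grp_mulKVg g z) !coset_dist_mul2l.
by apply: H; apply: Gk_ldiv.
Qed.

Hypothesis hk : (0 < k)%N.
Hypothesis l_square_drop :
  forall g, lexlt (l (mul g g)) (l g) -> ht (l g - l (mul g g)) = 1%N.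

(* If [g] inverts the edge [x G_k, y G_k], then [h = x^-1 g x] moves [G_k]
   while [h^2] fixes it: [l (h^2) < l h], with a difference of height [k+1]. *)
Lemma coset_adjacent_no_inversion g x y : Gk l k.+1 g -> coset_adjacent x y ->
  same_coset mul inv l k (mul g x) y -> same_coset mul inv l k (mul g y) x -> False.
Proof.
move=> vg [vx vy p _] h1 h2.
have vgx := Gk_mul vg vx; have vgy := Gk_mul vg vy; have vggx := Gk_mul vg vgx.
move/(same_coset_dist0 vgx vy): h1 => h1; move/(same_coset_dist0 vgy vx): h2 => h2.
pose h := mul (inv x) (mul g x).
have vh : Gk l k.+1 h := Gk_ldiv vx vgx.
have hh : mul h h = mul (inv x) (mul g (mul g x)).
  by rewrite /h -(grp_assoc HG); congr (mul (inv x) _); rewrite -(grp_assoc HG) grp_mulKVg.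
have lh : 0 < l h 0 (Ordinal hkn).
  have := coset_dist_triangle vx vgx vy; rewrite h1 addr0 => t.
  by apply: lt_le_trans t.
have lhh : l (mul h h) 0 (Ordinal hkn) = 0.
  have := coset_dist_triangle vx vgy vggx.
  rewrite coset_dist_mul2l (coset_dist_sym x (mul g y)) h2 (coset_dist_sym y) h1 add0r => t.
  by apply/eqP; rewrite eq_le hh t coset_dist_ge0.
have lt : lexlt (l (mul h h)) (l h).
  by apply: (lexlt_coord (j := Ordinal hkn) (Gk_mul vh vh) vh); rewrite lhh.
have /ht_leP drop := eq_leq (l_square_drop lt).
by move: (drop (Ordinal hkn) hk); rewrite !mxE lhh subr0 => h0; rewrite h0 ltxx in lh.
Qed.

End LengthFunction.

Theorem lemma3p4 (T : Type) (mul : T -> T -> T) (inv : T -> T) (e : T)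
  (n : nat) (l : T -> 'rV[int]_n) (delta : 'rV[int]_n) :
  is_group mul inv e ->
  torsion_free mul e ->
  is_length_function mul inv e l ->
  hyperbolic mul inv l delta ->
  regular mul inv l delta ->
  ht delta = 1%N ->                                                  (* (A) *)
  (forall (g : T) (m : int), m != 0 ->
     lexlt (l (gpow mul inv e g m)) (l g) ->
     ht (l g - l (gpow mul inv e g m)) = 1%N) ->                     (* (B) *)
  (forall g : T, g <> e -> lexlt 0 (l g)) ->                         (* (C) *)
  forall k : nat, (1 <= k)%N -> (k < n)%N ->
    exists E : T -> T -> Prop, coset_tree_action mul inv e l k E.
Proof.
move=> HG _ Hl Hhyp Hreg Hd HB _ k hk hkn.
have Hdelta : (ht delta <= k)%N by rewrite Hd.
have square_drop g : lexlt (l (mul g g)) (l g) -> ht (l g - l (mul g g)) = 1%N.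
  by have := HB g 2 erefl; rewrite /= (grp_mulg1 HG).
exists (adjacent (Gk l k.+1) (coset_dist mul inv l hkn)).
rewrite /coset_tree_action /=.
split; [| split; [| split; [| split; [| split; [| split]]]]].
- by move=> x y [].
- exact: (coset_adjacent_congr HG Hl).
- by move=> x y /(adjacent_sym (coset_dist_sym HG Hl hkn)).
- exact: (coset_adjacent_connected HG Hl hkn).
- exact: (coset_adjacent_acyclic HG Hl Hdelta Hhyp Hreg).
- exact: (coset_adjacent_mul2l HG Hl).
- exact: (coset_adjacent_no_inversion HG Hl hk square_drop).
Qed.
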